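(* Let $S \subseteq \mathbb{R}^r$ be a linear subspace, $0 \le d \le r$, and $C(S,d)$ the associated s-cone. Let $x, x' \in C(S,d)$ be nonzero vectors which are not proportional. If $\operatorname{supp}(x') \subseteq \operatorname{supp}(x)$, then there exists a nonzero vector $x'' = x - \lambda x' \in C(S,d)$ with $\lambda \in \mathbb{R}$ such that $\operatorname{sign}(x'') \le \operatorname{sign}(x)$ and $\operatorname{supp}(x'') \subsetneq \operatorname{supp}(x)$. If moreover $\operatorname{sign}(x') \le \operatorname{sign}(x)$, then $\lambda > 0$ can be taken.
   Context: For $x \in \mathbb{R}^n$, $\operatorname{supp}(x) = \{ i \mid x_i \neq 0\}$, and $\operatorname{sign}(x) \in \{-,0,+\}^n$ is obtained by applying the sign function componentwise. The relations $0 < -$ and $0 < +$ induce a componentwise partial order on $\{-,0,+\}^n$ ($-$ and $+$ incomparable). For a linear subspace $S \subseteq \mathbb{R}^r$ and $0 \le d \le r$, the s-cone is $C(S,d) = \{ (x,y) \in \mathbb{R}^{(r-d)+d} \mid (x,y) \in S,\ y \ge 0\}$. *)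

From HB Require Import structures.
From mathcomp Require Import all_boot all_order all_algebra.
Set Implicit Arguments. Unset Strict Implicit. Unset Printing Implicit Defensive.
Import Order.TTheory GRing.Theory Num.Theory.
Local Open Scope ring_scope.

Section Defs.
Variable R : realFieldType.
Variable r : nat.

Definition supp (x : 'rV[R]_r) : {set 'I_r} := [set i | x 0 i != 0].

Inductive sgn := SNeg | SZero | SPos.
Definition sgn_of (a : R) : sgn :=
  if a == 0 then SZero else if 0 < a then SPos else SNeg.
Definition sgn_le (a b : sgn) : bool :=
  match a, b with
  | SZero, _ => true
  | SNeg, SNeg => true
  | SPos, SPos => true
  | _, _ => false
  end.
Definition sign_le (x y : 'rV[R]_r) : bool :=
  [forall i, sgn_le (sgn_of (x 0 i)) (sgn_of (y 0 i))].

Definition scone (S : {vspace 'rV[R]_r}) (d : nat) : pred 'rV[R]_r :=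
  [pred x | (x \in S) && [forall i : 'I_r, (r - d <= i)%N ==> (0 <= x 0 i)]].

Definition proportional (x y : 'rV[R]_r) : Prop :=
  exists c : R, x = c *: y \/ y = c *: x.
End Defs.

(* Among the coordinates in supp x', pick one minimizing |x_j / x'_j| and
   let lambda be the ratio there.  Subtracting lambda x' kills that
   coordinate, and by minimality it never flips or creates a sign of x
   elsewhere, so x - lambda x' has sign below sign(x) and strictly smaller
   support.  The sign condition makes it stay in the cone, and it is nonzero
   because x and x' are not proportional.  If sign(x') <= sign(x), the
   chosen ratio compares two entries of equal sign, hence is positive. *)
From HB Require Import structures.
From mathcomp Require Import all_boot all_order all_algebra ring.
Set Implicit Arguments.
Unset Strict Implicit.
Unset Printing Implicit Defensive.

Import Order.TTheory GRing.Theory Num.Theory.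
Local Open Scope ring_scope.

Section SignValues.
Variable R : realFieldType.
Implicit Types a b : R.

Lemma sgn_le_of_mul_ge0 a b :
  0 <= a * b -> (b = 0 -> a = 0) -> sgn_le (sgn_of a) (sgn_of b).
Proof.
move=> ab_ge0 b0_a0; rewrite /sgn_of.
have [_|a_neq0] := eqVneq a 0; first by [].
have [b0|b_neq0] := eqVneq b 0; first by rewrite (b0_a0 b0) eqxx in a_neq0.
have [a_gt0|a_le0] := ltP 0 a; have [b_gt0|b_le0] := ltP 0 b => //.
- have b_lt0 : b < 0 by rewrite lt_neqAle b_neq0.
  by move: ab_ge0; rewrite leNgt pmulr_rlt0 ?b_lt0.
- have a_lt0 : a < 0 by rewrite lt_neqAle a_neq0.
  by move: ab_ge0; rewrite leNgt nmulr_rlt0 ?b_gt0.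
Qed.

Lemma sgn_le_ge0 a b : sgn_le (sgn_of a) (sgn_of b) -> 0 <= b -> 0 <= a.
Proof.
rewrite /sgn_of; have [->|_] := eqVneq a 0; first by [].
have [a_gt0 _ _|_] := ltP 0 a; first exact: ltW.
have [_|b_neq0] := eqVneq b 0; first by [].
by case: ltP => // b_le0 _ b_ge0; rewrite eq_le b_le0 b_ge0 in b_neq0.
Qed.

Lemma sgn_le_div_gt0 a b : sgn_le (sgn_of a) (sgn_of b) -> a != 0 -> 0 < b / a.
Proof.
rewrite /sgn_of => + a_neq0; rewrite (negbTE a_neq0).
have [_|b_neq0] := eqVneq b 0; first by case: ifP.
case: (ltP 0 a) => a_le0; case: (ltP 0 b) => b_le0 //= _.
  by rewrite divr_gt0.
have a_lt0 : a < 0 by rewrite lt_neqAle a_neq0.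
have b_lt0 : b < 0 by rewrite lt_neqAle b_neq0.
by rewrite -mulrNN -invrN divr_gt0 // oppr_gt0.
Qed.

Lemma mul_subr_ge0_le_norm a b : `|b| <= `|a| -> 0 <= (a - b) * a.
Proof.
move=> le_ba; rewrite mulrBl subr_ge0 (le_trans (ler_norm _)) // normrM.
rewrite (le_trans (ler_wpM2r (normr_ge0 a) le_ba)) //.
by rewrite -normrM ger0_norm // -expr2 sqr_ge0.
Qed.

End SignValues.

Section SignVectors.
Variables (R : realFieldType) (r : nat).
Implicit Types x y : 'rV[R]_r.

Lemma sign_leP x y :
  (forall j, 0 <= y 0 j * x 0 j) -> (forall j, x 0 j = 0 -> y 0 j = 0) ->
  sign_le y x.
Proof.
move=> ge0 zero; apply/forallP => j; exact: sgn_le_of_mul_ge0 (ge0 j) (zero j).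
Qed.

Lemma supp_sign_le x y : sign_le y x -> supp y \subset supp x.
Proof.
move=> /forallP le_yx; apply/subsetP => j; rewrite !inE.
apply: contra => /eqP xj0; move: (le_yx j); rewrite /sgn_of xj0 eqxx.
by case: eqP => // _; case: ifP.
Qed.

Lemma supp_proper_sign_le x y i :
  sign_le y x -> y 0 i = 0 -> x 0 i != 0 -> supp y \proper supp x.
Proof.
move=> le_yx yi0 xi_neq0; apply/properP; split; first exact: supp_sign_le.
by exists i; rewrite !inE ?yi0 ?eqxx.
Qed.

Lemma scone_sign_le (S : {vspace 'rV[R]_r}) d x y :
  x \in scone S d -> y \in S -> sign_le y x -> y \in scone S d.
Proof.
rewrite !inE => /andP[_ /forallP x_ge0] yS /forallP le_yx.
rewrite yS; apply/forallP => j; apply/implyP => dj.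
exact: sgn_le_ge0 (le_yx j) (implyP (x_ge0 j) dj).
Qed.

Lemma min_ratio_sign_le x x' :
  x' != 0 -> supp x' \subset supp x ->
  exists2 i, x' 0 i != 0 & sign_le (x - (x 0 i / x' 0 i) *: x') x.
Proof.
move=> x'_neq0 sub_x'x.
have [j0 j0_x'] : exists j0, j0 \in supp x'.
  apply/existsP; apply: contraNT x'_neq0 => /existsPn x'_eq0.
  apply/eqP/rowP => j; rewrite mxE.
  by move: (x'_eq0 j); rewrite inE negbK => /eqP.
pose ratio j := `|x 0 j / x' 0 j|.
have [i i_x' i_min] := arg_minP ratio j0_x'.
have {}i_min : forall j, j \in supp x' -> ratio i <= ratio j := i_min.
have : i \in supp x' := i_x'; rewrite inE => x'i_neq0.
exists i => //.
apply: sign_leP => j; rewrite !mxE.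
- have [->|x'j_neq0] := eqVneq (x' 0 j) 0.
    by rewrite mulr0 subr0 -expr2 sqr_ge0.
  have le_ratio : ratio i <= ratio j by apply: i_min; rewrite inE.
  rewrite -[x 0 j](divfK x'j_neq0).
  have -> : forall a b c : R,
      (a * c - b * c) * (a * c) = c ^+ 2 * ((a - b) * a).
    by move=> a b c; ring.
  by rewrite mulr_ge0 ?sqr_ge0 ?mul_subr_ge0_le_norm.
- move=> xj0; have [->|x'j_neq0] := eqVneq (x' 0 j) 0.
    by rewrite mulr0 subr0.
  by move: (subsetP sub_x'x j); rewrite !inE x'j_neq0 xj0 eqxx => /(_ isT).
Qed.

End SignVectors.

Theorem lemma1 (R : realFieldType) (r d : nat) (S : {vspace 'rV[R]_r})
  (x x' : 'rV[R]_r) :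
  (d <= r)%N ->
  x \in scone S d -> x' \in scone S d ->
  x != 0 -> x' != 0 -> ~ proportional x x' ->
  supp x' \subset supp x ->
  (exists lambda : R,
      let x'' := x - lambda *: x' in
      [/\ x'' != 0, x'' \in scone S d, sign_le x'' x & supp x'' \proper supp x])
  /\
  (sign_le x' x ->
   exists lambda : R, 0 < lambda /\
      let x'' := x - lambda *: x' in
      [/\ x'' != 0, x'' \in scone S d, sign_le x'' x & supp x'' \proper supp x]).
Proof.
move=> _ xC x'C _ x'_neq0 not_prop sub_x'x.
have [i x'i_neq0 le_x''x] := min_ratio_sign_le x'_neq0 sub_x'x.
set lam := x 0 i / x' 0 i in le_x''x *.
have x''S : x - lam *: x' \in S.
  move: xC x'C; rewrite !inE => /andP[xS _] /andP[x'S _].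
  by rewrite memvB ?memvZ.
have x''_neq0 : x - lam *: x' != 0.
  apply: contra_not_neq not_prop => /eqP; rewrite subr_eq0 => /eqP x_lam.
  by exists lam; left.
have x''i0 : (x - lam *: x') 0 i = 0 by rewrite !mxE divfK ?subrr.
have xi_neq0 : x 0 i != 0.
  by move: (subsetP sub_x'x i); rewrite !inE => /(_ x'i_neq0).
have x''_ok : [/\ x - lam *: x' != 0, x - lam *: x' \in scone S d,
    sign_le (x - lam *: x') x & supp (x - lam *: x') \proper supp x].
  split=> //; first exact: scone_sign_le xC x''S le_x''x.
  exact: supp_proper_sign_le le_x''x x''i0 xi_neq0.
split=> [|le_x'x]; first by exists lam.
by exists lam; split=> //; apply: sgn_le_div_gt0 (forallP le_x'x i) x'i_neq0.
Qed.
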